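(* Let $\Delta$ be a compact Hausdorff space, $u\colon\Delta\to\mathbb R$ continuous, $v\colon\Delta\to\mathbb R$ upper semicontinuous, $f(\alpha)=\max\{v(\bm w):u(\bm w)=\alpha\}$ (with $\max\varnothing=-\infty$) and $\tau(q)=\min_{\bm w\in\Delta}\{q\,u(\bm w)-v(\bm w)\}$. Then the limits $\partial^-\tau(\infty)=\lim_{q\to\infty}\tau(q)/q$ and $\partial^+\tau(-\infty)=\lim_{q\to-\infty}\tau(q)/q$ exist and are finite, and $\tau$ is supported at $(\infty,\partial^-\tau(\infty))$ and at $(-\infty,\partial^+\tau(-\infty))$. In particular $\tau^*(\partial^-\tau(\infty))=f(\partial^-\tau(\infty))$ and $\tau^*(\partial^+\tau(-\infty))=f(\partial^+\tau(-\infty))$.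
   Context: Concave conjugate: $\tau^*(\alpha)=\inf_{q\in\mathbb R}(q\alpha-\tau(q))$. $\tau$ is supported at $(\infty,a)$ (with $a=\partial^-\tau(\infty)$) if there is $\bm w\in\Delta$ such that the line $q\mapsto q\,u(\bm w)-v(\bm w)$ is the affine asymptote of $\tau$ as $q\to\infty$, i.e. $\tau(q)-(q\,u(\bm w)-v(\bm w))\to0$ as $q\to\infty$; similarly for $(-\infty,\partial^+\tau(-\infty))$ as $q\to-\infty$. *)

From HB Require Import structures.
From mathcomp Require Import all_boot all_order all_algebra.
From mathcomp Require Import all_classical all_reals all_analysis.
Set Implicit Arguments. Unset Strict Implicit. Unset Printing Implicit Defensive.
Import Order.TTheory GRing.Theory Num.Theory numFieldNormedType.Exports.
Local Open Scope classical_set_scope.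
Local Open Scope ring_scope.

Section Defs.
Context {T : topologicalType} {R : realType}.

Definition upper_semicontinuous (v : T -> R) :=
  forall x (a : R), v x < a -> exists2 V, nbhs x V & forall y, V y -> v y < a.

(* tau(q) = min_{w in Delta} (q u(w) - v(w)), written as an infimum
   (the minimum is attained under the standing hypotheses). *)
Definition tau (u v : T -> R) (q : R) : R :=
  inf [set q * u w - v w | w in [set: T]].

Definition fspec (u v : T -> R) (alpha : R) : \bar R :=
  ereal_sup [set (v w)%:E | w in [set w | u w = alpha]].

Definition conj_concave (t : R -> R) (alpha : R) : \bar R :=
  ereal_inf [set (q * alpha - t q)%:E | q in [set: R]].

Definition supported_pinfty (u v : T -> R) (t : R -> R) :=
  exists w : T, (t q - (q * u w - v w)) @[q --> +oo] --> 0.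

Definition supported_ninfty (u v : T -> R) (t : R -> R) :=
  exists w : T, (t q - (q * u w - v w)) @[q --> -oo] --> 0.

End Defs.

(* As q -> +oo, tau(q) is governed by the minimum m of u: if w attains m and
   maximises v among the minimisers of u (upper semicontinuity on a compact
   set), then tau(q) <= q m - v(w) for every q.  Conversely, by compactness the
   points where v exceeds v(w) + e all satisfy u >= m + d for some d > 0, so
   they are irrelevant once q d exceeds the oscillation of v, and
   tau(q) >= q m - v(w) - e for large q.  Hence q m - v(w) is the asymptote of
   tau, tau(q)/q -> m, and tau^*(m) = v(w) = f(m).  The case q -> -oo is the
   same statement for -u. *)

From HB Require Import structures.
From mathcomp Require Import all_boot all_order all_algebra.
From mathcomp Require Import all_classical all_reals all_analysis.
From mathcomp Require Import lra.
Import Order.TTheory GRing.Theory Num.Theory numFieldNormedType.Exports.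
Local Open Scope classical_set_scope.
Local Open Scope ring_scope.

Section UpperSemicontinuous.
Context {R : realType} {T : topologicalType}.

Lemma continuous_usc {u : T -> R} : continuous u -> upper_semicontinuous u.
Proof.
move=> cu x a ua; exists (u @^-1` [set z | z < a]) => //.
by apply: cu; apply: open_nbhs_nbhs; split => //; exact: open_lt.
Qed.

Lemma usc_closed_ge {v : T -> R} {c : R} : upper_semicontinuous v ->
  closed [set x | c <= v x].
Proof.
move=> usc p clp /=; rewrite leNgt; apply/negP => vp.
have [V Vp Vlt] := usc p c vp.
have [z [/= cz Vz]] := clp V Vp.
by have := Vlt z Vz; rewrite ltNge cz.
Qed.

(* If no maximum existed, the sets {y in A | v w < v y} would generate a proper
   filter on A; a cluster point p of it contradicts upper semicontinuity at p. *)
Lemma usc_attains_max {A : set T} {v : T -> R} : compact A -> A !=set0 ->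
  upper_semicontinuous v -> exists2 w, A w & forall y, A y -> v y <= v w.
Proof.
move=> cA [a0 Aa0] usc; apply: contrapT => nomax.
have above w : A w -> exists2 y, A y & v w < v y.
  move=> Aw; apply: contrapT => nabove; apply: nomax; exists w => // y Ay.
  by rewrite leNgt; apply/negP => lt; apply: nabove; exists y.
pose B w := [set y | A y /\ v w < v y].
have FB : Filter (filter_from A B).
  apply: filter_from_filter; first by exists a0.
  move=> i j Ai Aj; case: (leP (v i) (v j)) => hij.
    by exists j => // y [Ay vy]; split; split => //; exact: le_lt_trans vy.
  by exists i => // y [Ay vy]; split; split => //; exact: lt_trans vy.
have PB : ProperFilter (filter_from A B).
  by apply: filter_from_proper => i Ai; have [y Ay vy] := above i Ai; exists y.
have FA : filter_from A B A by exists a0 => // y [].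
have [p [Ap clp]] := cA _ PB FA.
have [y Ay vy] := above p Ap.
have [V Vp Vlt] := usc p (v y) vy.
have [z [[Az vz] Vz]] := clp (B y) V (in_filter_from _ Ay) Vp.
by have := Vlt z Vz; rewrite ltNge (ltW vz).
Qed.

End UpperSemicontinuous.

Section MinimalSlope.
Context {R : realType} {T : topologicalType}.
Variables (cT : compact [set: T]) (w0 : T).
Context {u v : T -> R}.
Hypotheses (cu : continuous u) (usc_v : upper_semicontinuous v).

Let T_neq0 : [set: T] !=set0. Proof. by exists w0. Qed.
Let usc_Nu : upper_semicontinuous (fun w => - u w).
Proof. by apply: continuous_usc => x; exact: continuousN (cu x). Qed.

Lemma usc_ubound {g : T -> R} : upper_semicontinuous g ->
  exists M, forall w, g w <= M.
Proof.
move=> usc_g; have [w _ gw] := usc_attains_max cT T_neq0 usc_g.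
by exists (g w) => y; exact: gw.
Qed.

Lemma tau_le q w : tau u v q <= q * u w - v w.
Proof.
have [M uM] := usc_ubound (continuous_usc cu).
have [m um] := usc_ubound usc_Nu.
have [V vV] := usc_ubound usc_v.
apply: ge_inf; last by exists w.
exists (Num.min (q * - m) (q * M) - V) => _ [y _ <-].
apply: lerB => //; rewrite ge_min; case: (leP 0 q) => q0; apply/orP.
  by left; apply: ler_wpM2l => //; rewrite lerNl.
by right; apply: ler_wnM2l; [exact: ltW|].
Qed.

Lemma tau_ge q c : (forall w, c <= q * u w - v w) -> c <= tau u v q.
Proof.
move=> lb; apply: lb_le_inf; first by exists (q * u w0 - v w0), w0.
by move=> _ [w _ <-].
Qed.

Lemma exists_extremal_point :
  exists ws, (forall y, u ws <= u y) /\ (forall y, u y = u ws -> v y <= v ws).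
Proof.
have [wm _ wm_min] := usc_attains_max cT T_neq0 usc_Nu.
pose K := [set x | - u wm <= - u x].
have cK : compact K.
  by apply: subclosed_compact cT _ => //; exact: usc_closed_ge usc_Nu.
have [ws Kws ws_max] := usc_attains_max cK (ex_intro _ wm (lexx _)) usc_v.
have uws : u ws = u wm.
  by apply/eqP; rewrite eq_le -lerN2 Kws /= -lerN2 wm_min.
exists ws; split => [y|y uy]; first by rewrite uws -lerN2 wm_min.
by apply: ws_max; rewrite /K /= uy uws.
Qed.

Variable ws : T.
Hypotheses (ws_umin : forall y, u ws <= u y)
  (ws_vmax : forall y, u y = u ws -> v y <= v ws).

Lemma tau_le_asymptote q : tau u v q <= q * u ws - v ws.
Proof. exact: tau_le. Qed.

Lemma u_gap_above_vmax {e : R} : 0 < e ->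
  exists2 d, 0 < d & forall w, v ws + e <= v w -> u ws + d <= u w.
Proof.
move=> e0; pose S := [set w | v ws + e <= v w].
have [[s Ss]|noS] := pselect (S !=set0); last first.
  by exists 1 => // w Sw; exfalso; apply: noS; exists w.
have cS : compact S by apply: subclosed_compact cT _ => //; exact: usc_closed_ge.
have [s0 Ss0 s0_min] := usc_attains_max cS (ex_intro _ s Ss) usc_Nu.
exists (u s0 - u ws) => [|w Sw]; last by rewrite addrC subrK -lerN2 s0_min.
rewrite subr_gt0 lt_neqAle ws_umin andbT; apply/negP => /eqP us0.
by have := ws_vmax s0 (esym us0); rewrite /S /= in Ss0; lra.
Qed.

Lemma tau_ge_asymptote {e : R} : 0 < e ->
  \forall q \near +oo, q * u ws - v ws - e <= tau u v q.
Proof.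
move=> e0; have [d d0 gap] := u_gap_above_vmax e0.
have [V vV] := usc_ubound usc_v.
apply: filterS2 (nbhs_pinfty_ge (num_real 0)) (nbhs_pinfty_ge (num_real ((V - v ws) / d))).
move=> q q0 qd; apply: tau_ge => w.
have qu : q * u ws <= q * u w by apply: ler_wpM2l.
have [vw|vw] := ltP (v w) (v ws + e); first lra.
have qdu : q * u ws + q * d <= q * u w.
  by rewrite -mulrDr; apply: ler_wpM2l => //; exact: gap.
have : V - v ws <= q * d by rewrite -ler_pdivrMr.
by have := vV w; lra.
Qed.

Lemma tau_sub_asymptote_cvg :
  (tau u v q - (q * u ws - v ws)) @[q --> +oo] --> 0.
Proof.
apply/cvgrPdist_le => e e0; apply: filterS (tau_ge_asymptote e0) => q lq.
by rewrite sub0r normrN ler_norml; have := tau_le_asymptote q; lra.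
Qed.

Lemma tau_div_cvg : (tau u v q / q) @[q --> +oo] --> u ws.
Proof.
apply/cvgrPdist_le => e e0.
apply: filterS3 (tau_ge_asymptote ltr01) (nbhs_pinfty_ge (num_real 1))
  (nbhs_pinfty_ge (num_real ((1 + `|v ws|) / e))) => q lq q1 qe.
have q0 : 0 < q by apply: lt_le_trans q1.
have -> : u ws - tau u v q / q = (q * u ws - tau u v q) / q.
  by rewrite mulrBl mulrAC divff ?gt_eqF // mul1r.
rewrite normrM (gtr0_norm (x := q^-1)) ?invr_gt0 // ler_pdivrMr //.
have : 1 + `|v ws| <= e * q by rewrite mulrC -ler_pdivrMr.
have := tau_le_asymptote q; have := lexx `|v ws|; rewrite ler_norml.
by move=> /andP[? ?] ? ?; rewrite ler_norml; apply/andP; split; lra.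
Qed.

Lemma fspec_at_min : fspec u v (u ws) = (v ws)%:E.
Proof.
apply/eqP; rewrite eq_le; apply/andP; split.
  by apply: ge_ereal_sup => _ [w uw <-]; rewrite lee_fin; exact: ws_vmax.
by apply: ereal_sup_ubound; exists ws.
Qed.

Lemma conj_concave_tau_at_min : conj_concave (tau u v) (u ws) = (v ws)%:E.
Proof.
apply/eqP; rewrite eq_le; apply/andP; split.
  apply/lee_addgt0Pr => e e0; have [q lq] := filter_ex (tau_ge_asymptote e0).
  apply: le_trans (ereal_inf_lbound _) _; first by exists q.
  by rewrite lee_fin; lra.
by apply: le_ereal_inf_tmp => _ [q _ <-]; rewrite lee_fin; have := tau_le_asymptote q; lra.
Qed.

End MinimalSlope.

Lemma tau_pinfty {R : realType} {T : topologicalType}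
  (cT : compact [set: T]) (w0 : T) {u v : T -> R}
  (cu : continuous u) (usc_v : upper_semicontinuous v) :
  exists a : R,
    [/\ (tau u v q / q) @[q --> +oo] --> a,
        supported_pinfty u v (tau u v) &
        conj_concave (tau u v) a = fspec u v a].
Proof.
have [ws [ws_umin ws_vmax]] := exists_extremal_point cT w0 cu usc_v.
exists (u ws); split.
- exact: tau_div_cvg.
- by exists ws; exact: tau_sub_asymptote_cvg.
- by rewrite fspec_at_min // (conj_concave_tau_at_min cT w0 cu usc_v).
Qed.

Section Reflection.
Context {R : realType} {T : topologicalType}.
Variables u v : T -> R.

Lemma tauN q : tau (fun w => - u w) v q = tau u v (- q).
Proof.
by rewrite /tau; congr inf; congr image; apply: funext => w; rewrite mulrN mulNr.
Qed.

Lemma fspecN b : fspec (fun w => - u w) v b = fspec u v (- b).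
Proof.
rewrite /fspec; congr ereal_sup; congr image; apply: funext => w /=.
by apply/propext; split => h; [rewrite -h opprK | rewrite h opprK].
Qed.

Lemma conj_concave_tauN b :
  conj_concave (tau (fun w => - u w) v) b = conj_concave (tau u v) (- b).
Proof.
rewrite /conj_concave; congr ereal_inf; apply/seteqP; split => _ [q _ <-].
  by exists (- q) => //; rewrite tauN mulrNN.
by exists (- q) => //; rewrite tauN (opprK q) mulNr mulrN.
Qed.

End Reflection.

Theorem mainTheorem10 (R : realType) (T : topologicalType)
  (hT : hausdorff_space T) (cT : compact [set: T]) (w0 : T)
  (u v : T -> R) (cu : continuous u) (usc_v : upper_semicontinuous v) :
  exists a b : R,
    [/\ (tau u v q / q) @[q --> +oo] --> a,
        (tau u v q / q) @[q --> -oo] --> b,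
        supported_pinfty u v (tau u v) /\ supported_ninfty u v (tau u v),
        conj_concave (tau u v) a = fspec u v a &
        conj_concave (tau u v) b = fspec u v b].
Proof.
have [a [ha sa ca]] := tau_pinfty cT w0 cu usc_v.
have cNu : continuous (fun w => - u w) by move=> x; exact: continuousN (cu x).
have [b [hb [w hw] cb]] := tau_pinfty cT w0 cNu usc_v.
exists a, (- b); split => //.
- apply/cvgNy_compNP.
  have -> : (fun q => tau u v q / q) \o -%R = (fun q => - (tau (fun w => - u w) v q / q)).
    by apply: funext => q /=; rewrite tauN invrN mulrN.
  exact: cvgN.
- split => //; exists w; apply/cvgNy_compNP.
  have -> : (fun q => tau u v q - (q * u w - v w)) \o -%R =
      (fun q => tau (fun w => - u w) v q - (q * - u w - v w)).
    by apply: funext => q /=; rewrite tauN mulrN mulNr.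
  exact: hw.
- by rewrite -conj_concave_tauN -fspecN.
Qed.
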